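(* For any finite simple graph $X$ and any update sequence $\pi\in S_X$, the increasing extended threshold SDS map $\mathbf{F}^\uparrow_\pi$ has no periodic orbit of length $\ge 2$, and the increasing extended threshold GCA map $\mathbf{F}^\uparrow$ has no periodic orbit of length $\ge 3$.
   Context: Let $X$ be a finite simple graph with vertices $1,\dots,n$; $d(v)$ is the degree of $v$ and $n[v]$ the closed neighborhood of $v$. An extended vertex state is $s_v=(x_v,k_v)\in\{0,1\}\times\{1,\dots,d(v)+1\}$, and $\mathcal{S}$ is the product of these sets. Let $\sigma(x[v])=|\{u\in n[v]:x_u=1\}|$. The increasing vertex function maps $(x_v,k_v)$ to $(x_v',k_v')$ with $x_v'=1$ iff $\sigma(x[v])\ge k_v$, and $k_v'=k_v+1$ if $x_v=0$ and $\sigma(x[v])\ge k_v$, else $k_v'=k_v$. The local map $F^\uparrow_v$ updates only coordinate $v$ by this rule. For a permutation $\pi=(\pi_1,\dots,\pi_n)$ of the vertices, $\mathbf{F}^\uparrow_\pi=F^\uparrow_{\pi_n}\circ\cdots\circ F^\uparrow_{\pi_1}$; $\mathbf{F}^\uparrow$ applies the vertex function at all vertices simultaneously. A periodic orbit of length $m$ is a cycle of $m$ distinct states under iteration of the map. *)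

From mathcomp Require Import all_boot.
Set Implicit Arguments. Unset Strict Implicit. Unset Printing Implicit Defensive.

(* A finite simple graph: vertex type T (finite), edge relation e that is
   symmetric and irreflexive (hypotheses of the theorem). *)

Section ExtThreshold.
Variables (T : finType) (e : rel T).

Definition deg (v : T) : nat := #|[set u | e v u]|.

Definition cnbhd (v : T) : {set T} := [set u | (u == v) || e v u].

(* extended states: each vertex carries (x_v, k_v) *)
Definition state := {ffun T -> bool * nat}.

Definition in_S (s : state) : Prop :=
  forall v, 1 <= (s v).2 <= (deg v).+1.

Definition sigma (s : state) (v : T) : nat :=
  #|[set u in cnbhd v | (s u).1]|.

Definition vfun_up (s : state) (v : T) : bool * nat :=
  let xv := (s v).1 in
  let kv := (s v).2 in
  let fire := kv <= sigma s v in
  (fire, if ~~ xv && fire then kv.+1 else kv).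

Definition Floc_up (v : T) (s : state) : state :=
  [ffun u => if u == v then vfun_up s v else s u].

Definition SDS_up (pi : seq T) (s : state) : state :=
  foldl (fun st v => Floc_up v st) s pi.

Definition GCA_up (s : state) : state := [ffun v => vfun_up s v].

End ExtThreshold.

Definition has_periodic_orbit (T : finType) (e : rel T)
  (F : state T -> state T) (m : nat) : Prop :=
  exists s : state T,
    (forall i, i < m -> in_S e (iter i F s)) /\
    iter m F s = s /\
    (forall i j, i < m -> j < m -> i <> j -> iter i F s <> iter j F s).

(* Both maps only ever change a vertex state (x, k) along the chain
   (0, 1) -> (1, 1) -> (0, 2) -> (1, 2) -> ... : a firing vertex with x = 0
   increments k, a vertex with x = 1 that fails to fire drops to x = 0, and
   every other update is the identity. So the weight 2k + (1 - x) of each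
   vertex never decreases and strictly increases whenever the state of the
   vertex changes. Along a periodic orbit all weights must therefore be
   constant, every point of the orbit is fixed, and the orbit has length 1. *)

From mathcomp Require Import all_boot.

Set Implicit Arguments.
Unset Strict Implicit.
Unset Printing Implicit Defensive.

Section Progressive.
Variables (T : finType) (A : Type) (w : A -> nat).

Definition progressive (F : {ffun T -> A} -> {ffun T -> A}) : Prop :=
  forall (s : {ffun T -> A}) (v : T), w (s v) < w (F s v) \/ F s v = s v.

Lemma progressive_le F (s : {ffun T -> A}) v :
  progressive F -> w (s v) <= w (F s v).
Proof. by move=> /(_ s v) [/ltnW | ->]. Qed.

Lemma progressive_comp F G :
  progressive F -> progressive G -> progressive (fun s => G (F s)).
Proof.
move=> hF hG s v.
have [ltG | ->] := hG (F s) v; last exact: hF.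
by left; apply: leq_trans ltG; apply: progressive_le.
Qed.

Lemma progressive_iter_le F (s : {ffun T -> A}) v n :
  progressive F -> w (F s v) <= w (iter n.+1 F s v).
Proof.
move=> hF; elim: n => [|n IHn] //=.
exact: leq_trans IHn (progressive_le _ _ hF).
Qed.

Lemma progressive_periodic_fixed F (s : {ffun T -> A}) m :
  progressive F -> 0 < m -> iter m F s = s -> F s = s.
Proof.
move=> hF m_gt0 per; apply/ffunP => v.
have [ltF | //] := hF s v.
have := progressive_iter_le s v m.-1 hF.
by rewrite prednK // per leqNgt ltF.
Qed.

End Progressive.

Definition state_weight (p : bool * nat) : nat := (p.2).*2 + ~~ p.1.

Section IncreasingThreshold.
Variables (T : finType) (e : rel T).

Lemma vfun_up_progressive (s : state T) v :
  state_weight (s v) < state_weight (vfun_up e s v) \/ vfun_up e s v = s v.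
Proof.
rewrite /vfun_up /state_weight; case: (s v) => [[] k] /=;
  case: (k <= sigma e s v) => /=; [right | left | left | right] => //.
- by rewrite addn0 addn1.
- by rewrite doubleS addn0 addn1.
Qed.

Lemma Floc_up_progressive v : progressive state_weight (Floc_up e v).
Proof.
move=> s u; rewrite ffunE; case: eqP => [-> | _]; last by right.
exact: vfun_up_progressive.
Qed.

Lemma SDS_up_progressive pi : progressive state_weight (SDS_up e pi).
Proof.
elim: pi => [|v pi IHpi]; first by move=> s u; right.
exact: progressive_comp (Floc_up_progressive v) IHpi.
Qed.

Lemma GCA_up_progressive : progressive state_weight (GCA_up e).
Proof. by move=> s v; rewrite ffunE; apply: vfun_up_progressive. Qed.

Lemma progressive_no_periodic_orbit F m :
  progressive state_weight F -> 2 <= m -> ~ has_periodic_orbit e F m.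
Proof.
move=> hF m_ge2 [s [_ [per distinct]]].
apply: (distinct 1 0) => //; first exact: ltnW.
exact: progressive_periodic_fixed hF (ltnW m_ge2) per.
Qed.

End IncreasingThreshold.

Theorem proposition3p3 (T : finType) (e : rel T)
  (e_sym : symmetric e) (e_irr : irreflexive e)
  (pi : seq T) (pi_perm : perm_eq pi (enum T)) :
  (forall m, 2 <= m -> ~ has_periodic_orbit e (SDS_up e pi) m) /\
  (forall m, 3 <= m -> ~ has_periodic_orbit e (GCA_up e) m).
Proof.
split=> m m_ge.
  exact: progressive_no_periodic_orbit (SDS_up_progressive e pi) m_ge.
exact: progressive_no_periodic_orbit (GCA_up_progressive e) (ltnW m_ge).
Qed.
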